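(* Let $\tau>1$, let $\kappa\ge3$ be an integer and let $x^\dagger\in\mathcal X$ satisfy $\bar k^\delta_{\mathrm{pr}}(x^\dagger)\ge\kappa$. Then on the event $\Omega_\kappa$ one has $k^\delta_{\mathrm{pr}}(x^\dagger)-1\ge\kappa/3$.
   Context: Setting: $K:\mathcal X\to\mathcal Y$ compact injective with dense range between infinite-dimensional real separable Hilbert spaces, singular system $(\sigma_j,v_j,u_j)$ ($(v_j),(u_j)$ orthonormal bases, $\sigma_1\ge\sigma_2\ge\dots>0$, $Kv_j=\sigma_ju_j$, $K^*u_j=\sigma_jv_j$); $y^\dagger=Kx^\dagger$, $\delta>0$, data $(y^\delta,u_j):=(y^\dagger,u_j)+\delta(Z,u_j)$ with real random variables $(Z,u_j)$. With $\min\emptyset=\infty$: $k^\delta_{\mathrm{pr}}(x^\dagger):=\min\{k\in\mathbb N_0:\sum_{j=1}^k(y^\delta-y^\dagger,u_j)^2\ge\sum_{j=k+1}^\infty(y^\dagger,u_j)^2\}$, $\bar k^\delta_{\mathrm{pr}}(x^\dagger):=\min\{k\in\mathbb N_0:\delta^2k\ge\sum_{j=k+1}^\infty(y^\dagger,u_j)^2\}$. With $\varepsilon_\tau:=\min\big(\frac{(\tau+1)^2}{4}-1,\frac13\big)$, define the event $$\Omega_\kappa:=\Big\{\Big|\sum_{j=1}^m(y^\delta-y^\dagger,u_j)^2-m\delta^2\Big|\le\varepsilon_\tau m\delta^2\ \text{for all integers } m\ge\kappa/3\Big\}.$$ *)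

From mathcomp Require Import all_boot all_order all_algebra.
From mathcomp Require Import all_classical all_reals all_analysis.
Set Implicit Arguments. Unset Strict Implicit. Unset Printing Implicit Defensive.
Import Order.TTheory GRing.Theory Num.Theory.
Local Open Scope ring_scope.
Local Open Scope classical_set_scope.

(* Indices are 0-based: index j here corresponds to index j+1 in the paper. *)
Section Defs.
Context {R : realType}.

(* sum_{j > k} a_j^2  (paper indexing), as an extended real (possibly +oo). *)
Definition tail_sq (a : nat -> R) (k : nat) : \bar R :=
  (\sum_(k <= j <oo) ((a j) ^+ 2)%:E)%E.

Definition head_sq (e : nat -> R) (k : nat) : R :=
  \sum_(0 <= j < k) (e j) ^+ 2.

(* k_pr = min { k : sum_{j<=k} (y^delta - y^dagger, u_j)^2 >= sum_{j>k} (y^dagger,u_j)^2 },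
   min of the empty set = +oo. a j = (y^dagger,u_j), e j = (y^delta - y^dagger, u_j). *)
Definition k_pr (a e : nat -> R) : \bar R :=
  ereal_inf [set (k%:R)%:E | k in [set k : nat | (tail_sq a k <= (head_sq e k)%:E)%E]].

Definition kbar_pr (delta : R) (a : nat -> R) : \bar R :=
  ereal_inf [set (k%:R)%:E | k in [set k : nat | (tail_sq a k <= (delta ^+ 2 * k%:R)%:E)%E]].

Definition eps_tau (tau : R) : R := Num.min (((tau + 1) ^+ 2) / 4 - 1) (3^-1).

(* The event Omega_kappa, for noise coefficients e w j = (y^delta - y^dagger, u_j)(w). *)
Definition Omega_kappa {Omega : Type} (tau delta : R) (kappa : nat)
    (e : Omega -> nat -> R) : set Omega :=
  [set w | forall m : nat, (kappa%:R / 3 : R) <= m%:R ->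
     `| head_sq (e w) m - m%:R * delta ^+ 2 | <= eps_tau tau * m%:R * delta ^+ 2].

End Defs.

(* Suppose some [k < kappa/3 + 1] satisfies the discrepancy condition
   [tail k <= head k].  With [m = ceil (kappa/3) >= k], the event [Omega_kappa]
   gives [head m <= (1 + eps) m delta^2 <= 4/3 m delta^2 <= (kappa - 1) delta^2],
   so by monotonicity [tail (kappa - 1) <= tail k <= head k <= head m <= (kappa - 1) delta^2].
   Then [kappa - 1] satisfies the condition defining [kbar_pr], contradicting
   [kbar_pr >= kappa]. *)
From mathcomp Require Import all_boot all_order all_algebra.
From mathcomp Require Import all_classical all_reals all_analysis.
From mathcomp Require Import zify lra.
Set Implicit Arguments. Unset Strict Implicit. Unset Printing Implicit Defensive.
Import numFieldNormedType.Exports.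
Import Order.TTheory GRing.Theory Num.Theory.
Local Open Scope ring_scope.
Local Open Scope classical_set_scope.

Section DiscrepancyIndices.
Context {R : realType}.

Lemma tail_sq_le (a : nat -> R) k l : (k <= l)%N ->
  (tail_sq a l <= tail_sq a k)%E.
Proof.
move=> kl; rewrite /tail_sq (@nneseries_split R _ k (l - k)); last first.
  by move=> j _; rewrite lee_fin sqr_ge0.
rewrite subnKC //; apply: lee_paddl => //.
by apply: sume_ge0 => j _; rewrite lee_fin sqr_ge0.
Qed.

Lemma head_sq_le (e : nat -> R) k l : (k <= l)%N ->
  head_sq e k <= head_sq e l.
Proof.
move=> kl; rewrite /head_sq (big_cat_nat (leq0n k) kl) /= lerDl.
by apply: sumr_ge0 => j _; rewrite sqr_ge0.
Qed.

Lemma tail_sq_gt_of_lt_kbar_pr (delta : R) (a : nat -> R) n :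
  ((n%:R)%:E < kbar_pr delta a)%E -> ((delta ^+ 2 * n%:R)%:E < tail_sq a n)%E.
Proof.
move=> n_lt; rewrite ltNge; apply/negP => tail_le.
have : (kbar_pr delta a <= (n%:R)%:E)%E by apply: ereal_inf_lbound; exists n.
by rewrite leNgt n_lt.
Qed.

Lemma eps_tau_le_third (tau : R) : eps_tau tau <= 3^-1.
Proof. by rewrite /eps_tau ge_min lexx orbT. Qed.

Lemma head_sq_le_Omega_kappa (Omega : Type) (tau delta : R) (kappa : nat)
    (e : Omega -> nat -> R) w m :
  Omega_kappa tau delta kappa e w -> kappa%:R / 3 <= m%:R :> R ->
  head_sq (e w) m <= 4 / 3 * (m%:R * delta ^+ 2).
Proof.
move=> /(_ m) Hw /Hw dev_le.
have eps_le := eps_tau_le_third tau.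
have X_ge0 : 0 <= m%:R * delta ^+ 2 by rewrite mulr_ge0 ?sqr_ge0.
have := ler_norm (head_sq (e w) m - m%:R * delta ^+ 2).
have : eps_tau tau * m%:R * delta ^+ 2 <= 3^-1 * (m%:R * delta ^+ 2).
  by rewrite -mulrA ler_wpM2r.
move: dev_le; rewrite -mulrA; nra.
Qed.

(* [m = ceil (kappa / 3)]: large enough for [Omega_kappa], yet [4/3 m <= kappa - 1]. *)
Lemma ceil_third_bounds (kappa : nat) : (3 <= kappa)%N ->
  (kappa <= 3 * ((kappa + 2) %/ 3))%N /\ (4 * ((kappa + 2) %/ 3) <= 3 * (kappa - 1))%N.
Proof. by move=> k3; split; lia. Qed.

End DiscrepancyIndices.

Theorem mainTheorem10 (R : realType) (sigma xc : nat -> R) (Omega : Type)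
    (Z : Omega -> nat -> R) (tau delta : R) (kappa : nat) :
  (forall j, 0 < sigma j) ->
  (forall i j, (i <= j)%N -> sigma j <= sigma i) ->
  (sigma n @[n --> \oo] --> (0 : R)) ->
  (\sum_(0 <= j <oo) ((xc j) ^+ 2)%:E < +oo)%E ->
  0 < delta ->
  1 < tau ->
  (3 <= kappa)%N ->
  ((kappa%:R)%:E <= kbar_pr delta (fun j => (sigma j * xc j)%R))%E ->
  forall w : Omega,
    Omega_kappa tau delta kappa (fun w j => (delta * Z w j)%R) w ->
    (((kappa%:R / 3)%R)%:E <= k_pr (fun j => (sigma j * xc j)%R) (fun j => (delta * Z w j)%R) - 1%:E)%E.
Proof.
move=> _ _ _ _ _ _ k3 kbar_ge w Hw.
rewrite leeBrDr // -EFinD; apply: le_ereal_inf_tmp => _ [k /= discr_k <-].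
rewrite lee_fin leNgt; apply/negP => k_lt.
have [m_ge m_le] := ceil_third_bounds k3; set m := ((kappa + 2) %/ 3)%N in m_ge m_le.
have k_le_m : (k <= m)%N.
  suff : (k * 3 < kappa + 3)%N by rewrite /m; lia.
  by rewrite -(ltr_nat R) natrM natrD; lra.
have head_m : head_sq (fun j => delta * Z w j) m <= delta ^+ 2 * (kappa - 1)%:R.
  have m_ge' : kappa%:R / 3 <= m%:R :> R.
    by rewrite ler_pdivrMr // -(natrM R m 3) mulnC ler_nat.
  have := head_sq_le_Omega_kappa Hw m_ge'.
  have : (4 * m)%:R <= (3 * (kappa - 1))%:R :> R by rewrite ler_nat.
  rewrite !natrM; have := sqr_ge0 delta; nra.
have k_le : (k <= kappa - 1)%N by lia.
have kappa1_lt : (((kappa - 1)%N%:R)%:E < (kappa%:R)%:E :> \bar R)%E.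
  by rewrite lte_fin ltr_nat; lia.
have := tail_sq_gt_of_lt_kbar_pr (lt_le_trans kappa1_lt kbar_ge).
move/lt_le_trans/(_ (le_trans (tail_sq_le _ k_le) discr_k)).
by rewrite lte_fin ltNge (le_trans (head_sq_le _ k_le_m)).
Qed.
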